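(* Let $R\in(0,1)$ and let $c\colon[R,1]\to(0,\infty)$ be $C^{1,1}$ and satisfy the Herglotz condition $\frac{d}{dr}\left(\frac{r}{c(r)}\right)>0$. For a Lipschitz continuous $\lambda\colon[R,1]\to\mathbb C$, the function $$\Lambda^\lambda(r;x)=\cosh\left(\int_x^r\lambda(u)H(u;x)\,du\right)$$ is Lipschitz continuous on $\{(r,x);R\leq x<r\leq1\}$. It extends continuously to the diagonal $\{(r,r);R\leq r\leq1\}$ and has the constant value $1$ there.
   Context: $H(r;z)=\frac1{c(r)}\left(1-\left(\frac{z\,c(r)}{r\,c(z)}\right)^2\right)^{-1/2}$ for $R\leq z<r\leq1$. *)

From Stdlib Require Import Reals.
From Coquelicot Require Import Coquelicot.
Open Scope R_scope.

Definition has_deriv_on (f f' : R -> R) (a b : R) : Prop :=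
  forall t, a <= t <= b ->
  forall eps, 0 < eps -> exists delta, 0 < delta /\
    forall s, a <= s <= b -> Rabs (s - t) < delta ->
      Rabs (f s - f t - f' t * (s - t)) <= eps * Rabs (s - t).

Definition lipschitz_on (f : R -> R) (a b : R) : Prop :=
  exists L, forall s t, a <= s <= b -> a <= t <= b ->
    Rabs (f s - f t) <= L * Rabs (s - t).

Definition lipschitz_on_C (f : R -> C) (a b : R) : Prop :=
  exists L, forall s t, a <= s <= b -> a <= t <= b ->
    Cmod (Cminus (f s) (f t)) <= L * Rabs (s - t).

Definition C11_on (f : R -> R) (a b : R) : Prop :=
  exists f', has_deriv_on f f' a b /\ lipschitz_on f' a b.

Definition Hfun (c : R -> R) (r z : R) : R :=
  / c r * / sqrt (1 - (z * c r / (r * c z)) ^ 2).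

Definition cexp (z : C) : C :=
  (exp (fst z) * cos (snd z), exp (fst z) * sin (snd z)).
Definition ccosh (z : C) : C :=
  Cmult (RtoC (/ 2)) (Cplus (cexp z) (cexp (Copp z))).

Definition tri (a b r x : R) : Prop := a <= x /\ x < r /\ r <= b.

(* Write G(r) = r / c(r): the Herglotz condition says G' > 0, and G' is Lipschitz since c is C^{1,1}.
   Hence G(u)^2 - G(x)^2 = (u - x) Q(x,u) with Q Lipschitz and bounded below, so that
   H(u;x) = k(x,u) / (2 sqrt(u - x)) with k bounded and Lipschitz.  The substitution
   u = x + (r - x) t^2 turns the improper integral into sqrt(r - x) J(r,x), where
   J(r,x) = int_0^1 lam(u) k(x,u) dt is bounded and Lipschitz in (r,x).  As cosh w only depends on
   w^2 = (r - x) J(r,x)^2, which is Lipschitz and vanishes on the diagonal, both claims follow from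
   |cosh a - cosh b| <= |a^2 - b^2| exp(|a| + |b|) / 2. *)

From Stdlib Require Import Reals Lra.
From Coquelicot Require Import Coquelicot.
Open Scope R_scope.

Section BoundedLipschitz.

Context {T : Type} (d : T -> T -> R).

Definition bounded_lipschitz (f : T -> R) : Prop :=
  exists B L, forall s t, Rabs (f s) <= B /\ Rabs (f s - f t) <= L * d s t.

Definition bounded_lipschitz_C (f : T -> C) : Prop :=
  exists B L, forall s t, Cmod (f s) <= B /\ Cmod (Cminus (f s) (f t)) <= L * d s t.

Lemma bounded_lipschitz_const (a : R) : bounded_lipschitz (fun _ => a).
Proof.
exists (Rabs a), 0; intros s t; split; [lra|].
rewrite Rminus_diag, Rabs_R0; lra.
Qed.

Lemma bounded_lipschitz_plus (f g : T -> R) :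
  bounded_lipschitz f -> bounded_lipschitz g -> bounded_lipschitz (fun t => f t + g t).
Proof.
intros [B1 [L1 Hf]] [B2 [L2 Hg]]; exists (B1 + B2), (L1 + L2); intros s t.
destruct (Hf s t) as [Bf Lf], (Hg s t) as [Bg Lg]; split.
- eapply Rle_trans; [apply Rabs_triang | lra].
- replace (f s + g s - (f t + g t)) with ((f s - f t) + (g s - g t)) by ring.
  eapply Rle_trans; [apply Rabs_triang | lra].
Qed.

Lemma bounded_lipschitz_opp (f : T -> R) :
  bounded_lipschitz f -> bounded_lipschitz (fun t => - f t).
Proof.
intros [B [L Hf]]; exists B, L; intros s t.
replace (- f s - - f t) with (- (f s - f t)) by ring.
rewrite !Rabs_Ropp; apply Hf.
Qed.

Lemma bounded_lipschitz_mult (f g : T -> R) :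
  bounded_lipschitz f -> bounded_lipschitz g -> bounded_lipschitz (fun t => f t * g t).
Proof.
intros [B1 [L1 Hf]] [B2 [L2 Hg]]; exists (B1 * B2), (B1 * L2 + B2 * L1); intros s t.
destruct (Hf s t) as [Bfs Lf], (Hg s t) as [Bgs Lg], (Hg t s) as [Bgt _].
pose proof (Rabs_pos (f s)); pose proof (Rabs_pos (g t)).
pose proof (Rabs_pos (f s - f t)); pose proof (Rabs_pos (g s - g t)).
split.
- rewrite Rabs_mult; apply Rmult_le_compat; auto using Rabs_pos.
- replace (f s * g s - f t * g t) with (f s * (g s - g t) + g t * (f s - f t)) by ring.
  eapply Rle_trans; [apply Rabs_triang|]; rewrite !Rabs_mult.
  assert (Rabs (f s) * Rabs (g s - g t) <= B1 * (L2 * d s t)) by (apply Rmult_le_compat; lra).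
  assert (Rabs (g t) * Rabs (f s - f t) <= B2 * (L1 * d s t)) by (apply Rmult_le_compat; lra).
  lra.
Qed.

Lemma bounded_lipschitz_inv (f : T -> R) (m : R) : 0 < m -> (forall t, m <= f t) ->
  bounded_lipschitz f -> bounded_lipschitz (fun t => / f t).
Proof.
intros Hm Hfm [B [L Hf]]; exists (/ m), (L / (m * m)); intros s t.
pose proof (Hfm s); pose proof (Hfm t).
split.
- rewrite Rabs_right by (apply Rle_ge, Rlt_le, Rinv_0_lt_compat; lra).
  apply Rinv_le_contravar; lra.
- destruct (Hf s t) as [_ Lf].
  replace (/ f s - / f t) with ((f t - f s) / (f s * f t)) by (field; lra).
  rewrite Rabs_div by (apply Rmult_integral_contrapositive_currified; lra).
  rewrite Rabs_minus_sym, (Rabs_right (f s * f t)) by nra.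
  apply Rle_trans with (L * d s t * / (m * m)); [|right; field; lra].
  pose proof (Rabs_pos (f s - f t)).
  apply Rmult_le_compat; [lra | apply Rlt_le, Rinv_0_lt_compat; nra | exact Lf |].
  apply Rinv_le_contravar; nra.
Qed.

Lemma bounded_lipschitz_sqrt (f : T -> R) (m : R) : 0 < m -> (forall t, m <= f t) ->
  bounded_lipschitz f -> bounded_lipschitz (fun t => sqrt (f t)).
Proof.
intros Hm Hfm [B [L Hf]]; exists (sqrt B), (L / (2 * sqrt m)); intros s t.
destruct (Hf s t) as [Bf Lf]; pose proof (Hfm s); pose proof (Hfm t).
assert (Hsm : 0 < sqrt m) by (apply sqrt_lt_R0; lra).
assert (sqrt m <= sqrt (f s)) by (apply sqrt_le_1_alt; lra).
assert (sqrt m <= sqrt (f t)) by (apply sqrt_le_1_alt; lra).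
split.
- rewrite Rabs_right by (apply Rle_ge, sqrt_pos).
  apply sqrt_le_1_alt; rewrite Rabs_right in Bf; lra.
- replace (sqrt (f s) - sqrt (f t)) with ((f s - f t) / (sqrt (f s) + sqrt (f t))).
  2: { field_simplify_eq; [|lra]. rewrite <- !Rsqr_pow2, !Rsqr_sqrt; lra. }
  rewrite Rabs_div, (Rabs_right (_ + _)) by lra.
  apply Rle_trans with (L * d s t * / (2 * sqrt m)); [|right; field; lra].
  pose proof (Rabs_pos (f s - f t)).
  apply Rmult_le_compat; [lra | apply Rlt_le, Rinv_0_lt_compat; lra | exact Lf |].
  apply Rinv_le_contravar; lra.
Qed.

Lemma bounded_lipschitz_C_scal (f : T -> C) (g : T -> R) :
  bounded_lipschitz_C f -> bounded_lipschitz g ->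
  bounded_lipschitz_C (fun t => Cmult (f t) (RtoC (g t))).
Proof.
intros [B1 [L1 Hf]] [B2 [L2 Hg]]; exists (B1 * B2), (B1 * L2 + B2 * L1); intros s t.
destruct (Hf s t) as [Bfs Lf], (Hg s t) as [Bgs Lg], (Hg t s) as [Bgt _].
pose proof (Cmod_ge_0 (f s)); pose proof (Rabs_pos (g t)).
pose proof (Cmod_ge_0 (Cminus (f s) (f t))); pose proof (Rabs_pos (g s - g t)).
split.
- rewrite Cmod_mult, Cmod_R; apply Rmult_le_compat; auto using Rabs_pos, Cmod_ge_0.
- replace (Cminus (Cmult (f s) (RtoC (g s))) (Cmult (f t) (RtoC (g t)))) with
    (Cplus (Cmult (f s) (RtoC (g s - g t))) (Cmult (RtoC (g t)) (Cminus (f s) (f t)))).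
  2: { rewrite RtoC_minus; ring. }
  eapply Rle_trans; [apply Cmod_triangle|]; rewrite !Cmod_mult, !Cmod_R.
  assert (Cmod (f s) * Rabs (g s - g t) <= B1 * (L2 * d s t)) by (apply Rmult_le_compat; lra).
  assert (Rabs (g t) * Cmod (Cminus (f s) (f t)) <= B2 * (L1 * d s t)) by (apply Rmult_le_compat; lra).
  lra.
Qed.

End BoundedLipschitz.

Section Pullback.

Context {T U : Type} (dT : T -> T -> R) (dU : U -> U -> R) (h : U -> T) (M : R).
Hypothesis dT_nonneg : forall s t, 0 <= dT s t.
Hypothesis h_lipschitz : forall s t, dT (h s) (h t) <= M * dU s t.

Lemma bounded_lipschitz_comp (f : T -> R) :
  bounded_lipschitz dT f -> bounded_lipschitz dU (fun u => f (h u)).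
Proof.
intros [B [L Hf]]; exists B, (Rmax L 0 * M); intros s t.
destruct (Hf (h s) (h t)) as [Bf Lf]; split; [exact Bf|].
pose proof (dT_nonneg (h s) (h t)); pose proof (h_lipschitz s t).
pose proof (Rmax_l L 0); pose proof (Rmax_r L 0).
apply Rle_trans with (Rmax L 0 * dT (h s) (h t)); [nra|].
rewrite Rmult_assoc; apply Rmult_le_compat_l; lra.
Qed.

Lemma bounded_lipschitz_C_comp (f : T -> C) :
  bounded_lipschitz_C dT f -> bounded_lipschitz_C dU (fun u => f (h u)).
Proof.
intros [B [L Hf]]; exists B, (Rmax L 0 * M); intros s t.
destruct (Hf (h s) (h t)) as [Bf Lf]; split; [exact Bf|].
pose proof (dT_nonneg (h s) (h t)); pose proof (h_lipschitz s t).
pose proof (Rmax_l L 0); pose proof (Rmax_r L 0).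
apply Rle_trans with (Rmax L 0 * dT (h s) (h t)); [nra|].
rewrite Rmult_assoc; apply Rmult_le_compat_l; lra.
Qed.

End Pullback.

Definition dist_R (s t : R) : R := Rabs (s - t).

Definition dist_R2 (z w : R * R) : R := Rabs (fst z - fst w) + Rabs (snd z - snd w).

Lemma dist_R_nonneg (s t : R) : 0 <= dist_R s t.
Proof. apply Rabs_pos. Qed.

Lemma dist_R2_nonneg (z w : R * R) : 0 <= dist_R2 z w.
Proof.
unfold dist_R2; pose proof (Rabs_pos (fst z - fst w)); pose proof (Rabs_pos (snd z - snd w)); lra.
Qed.

Lemma bounded_lipschitz_fst (f : R -> R) :
  bounded_lipschitz dist_R f -> bounded_lipschitz dist_R2 (fun z => f (fst z)).
Proof.
apply (bounded_lipschitz_comp _ _ _ 1 dist_R_nonneg).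
intros s t; unfold dist_R, dist_R2; pose proof (Rabs_pos (snd s - snd t)); lra.
Qed.

Lemma bounded_lipschitz_snd (f : R -> R) :
  bounded_lipschitz dist_R f -> bounded_lipschitz dist_R2 (fun z => f (snd z)).
Proof.
apply (bounded_lipschitz_comp _ _ _ 1 dist_R_nonneg).
intros s t; unfold dist_R, dist_R2; pose proof (Rabs_pos (fst s - fst t)); lra.
Qed.

Lemma bounded_lipschitz_C_snd (f : R -> C) :
  bounded_lipschitz_C dist_R f -> bounded_lipschitz_C dist_R2 (fun z => f (snd z)).
Proof.
apply (bounded_lipschitz_C_comp _ _ _ 1 dist_R_nonneg).
intros s t; unfold dist_R, dist_R2; pose proof (Rabs_pos (fst s - fst t)); lra.
Qed.

Lemma continuous_of_lipschitz {V : NormedModule R_AbsRing} (f : R -> V) (t L : R) :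
  (forall s, norm (minus (f s) (f t)) <= L * Rabs (s - t)) -> continuous f t.
Proof.
intros Hf; apply (proj2 (filterlim_locally_ball_norm (F := locally t) f (f t))).
intros eps; set (L' := Rmax L 1).
assert (HL' : 0 < L') by (pose proof (Rmax_r L 1); unfold L'; lra).
assert (Hd : 0 < eps / L') by (apply Rdiv_lt_0_compat; [apply cond_pos | lra]).
exists (mkposreal _ Hd); intros s Hs; unfold ball_norm.
apply Rle_lt_trans with (L' * Rabs (s - t)).
- eapply Rle_trans; [apply Hf|].
  apply Rmult_le_compat_r; [apply Rabs_pos | apply Rmax_l].
- replace (pos eps) with (L' * (eps / L')) by (field; lra).
  apply Rmult_lt_compat_l; [lra | exact Hs].
Qed.

Lemma bounded_lipschitz_continuous (f : R -> R) (t : R) :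
  bounded_lipschitz dist_R f -> continuous f t.
Proof.
intros [B [L Hf]]; apply (continuous_of_lipschitz (V := R_NormedModule) _ _ L).
intros s; apply Hf.
Qed.

Lemma bounded_lipschitz_C_continuous (f : R -> C) (t : R) :
  bounded_lipschitz_C dist_R f -> continuous f t.
Proof.
intros [B [L Hf]]; apply (continuous_of_lipschitz (V := C_R_NormedModule) _ _ L).
intros s; rewrite <- Cmod_norm; apply Hf.
Qed.

Definition clamp (a b u : R) : R := Rmax a (Rmin b u).

Section Clamp.

Variables a b : R.
Hypothesis hab : a <= b.

Lemma clamp_in (u : R) : a <= clamp a b u <= b.
Proof. unfold clamp, Rmax, Rmin; repeat destruct Rle_dec; lra. Qed.

Lemma clamp_id (u : R) : a <= u <= b -> clamp a b u = u.
Proof. unfold clamp, Rmax, Rmin; repeat destruct Rle_dec; lra. Qed.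

Lemma clamp_idem (u : R) : clamp a b (clamp a b u) = clamp a b u.
Proof. apply clamp_id, clamp_in. Qed.

Lemma clamp_dist (s t : R) : Rabs (clamp a b s - clamp a b t) <= Rabs (s - t).
Proof.
unfold clamp, Rmax, Rmin; repeat destruct Rle_dec;
  unfold Rabs; repeat destruct Rcase_abs; lra.
Qed.

Lemma clamp_dist_mul (s t : R) :
  Rabs (clamp a b s - clamp a b t) * Rabs (s - clamp a b s) <= Rabs (s - t) * Rabs (s - t).
Proof.
unfold clamp, Rmax, Rmin; repeat destruct Rle_dec;
  unfold Rabs; repeat destruct Rcase_abs; nra.
Qed.

Lemma bounded_lipschitz_clamp (f : R -> R) :
  lipschitz_on f a b -> bounded_lipschitz dist_R (fun u => f (clamp a b u)).
Proof.
intros [L Hf]; exists (Rabs (f a) + Rmax L 0 * (b - a)), (Rmax L 0); intros s t.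
pose proof (clamp_in s); pose proof (clamp_in t); pose proof (Rmax_l L 0); pose proof (Rmax_r L 0).
assert (Hlip : forall u v, a <= u <= b -> a <= v <= b -> Rabs (f u - f v) <= Rmax L 0 * Rabs (u - v)).
{ intros u v Hu Hv; eapply Rle_trans; [apply Hf; assumption|].
  apply Rmult_le_compat_r; [apply Rabs_pos | lra]. }
split.
- replace (f (clamp a b s)) with (f a + (f (clamp a b s) - f a)) by ring.
  eapply Rle_trans; [apply Rabs_triang|]; apply Rplus_le_compat_l.
  eapply Rle_trans; [apply Hlip; lra|].
  apply Rmult_le_compat_l; [lra|]; rewrite Rabs_right; lra.
- eapply Rle_trans; [apply Hlip; assumption|].
  apply Rmult_le_compat_l; [lra | apply clamp_dist].
Qed.

Lemma bounded_lipschitz_C_clamp (f : R -> C) :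
  lipschitz_on_C f a b -> bounded_lipschitz_C dist_R (fun u => f (clamp a b u)).
Proof.
intros [L Hf]; exists (Cmod (f a) + Rmax L 0 * (b - a)), (Rmax L 0); intros s t.
pose proof (clamp_in s); pose proof (clamp_in t); pose proof (Rmax_l L 0); pose proof (Rmax_r L 0).
assert (Hlip : forall u v, a <= u <= b -> a <= v <= b ->
          Cmod (Cminus (f u) (f v)) <= Rmax L 0 * Rabs (u - v)).
{ intros u v Hu Hv; eapply Rle_trans; [apply Hf; assumption|].
  apply Rmult_le_compat_r; [apply Rabs_pos | lra]. }
split.
- replace (f (clamp a b s)) with (Cplus (f a) (Cminus (f (clamp a b s)) (f a))) by ring.
  eapply Rle_trans; [apply Cmod_triangle|]; apply Rplus_le_compat_l.
  eapply Rle_trans; [apply Hlip; lra|].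
  apply Rmult_le_compat_l; [lra|]; rewrite Rabs_right; lra.
- eapply Rle_trans; [apply Hlip; assumption|].
  apply Rmult_le_compat_l; [lra | apply clamp_dist].
Qed.

Lemma continuous_pos_lower_bound (f : R -> R) :
  (forall t, continuous f t) -> (forall t, a <= t <= b -> 0 < f t) ->
  exists m, 0 < m /\ forall t, a <= t <= b -> m <= f t.
Proof.
intros Hc Hpos.
destruct (continuity_ab_min f a b hab) as [t0 [Hmin Ht0]].
{ intros t _; apply continuity_pt_filterlim, Hc. }
exists (f t0); split; auto.
Qed.

End Clamp.

Lemma is_derive_remainder (F : R -> R) (t l : R) :
  is_derive F t l <->
  forall eps, 0 < eps -> exists delta, 0 < delta /\
    forall s, Rabs (s - t) < delta -> Rabs (F s - F t - l * (s - t)) <= eps * Rabs (s - t).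
Proof.
rewrite is_derive_Reals; split.
- intros Hd eps Heps; destruct (Hd eps Heps) as [delta Hdelta].
  exists delta; split; [apply cond_pos|]; intros s Hs.
  destruct (Req_dec s t) as [->|Hst].
  { rewrite !Rminus_diag, Rmult_0_r, Rminus_0_r, Rabs_R0; lra. }
  specialize (Hdelta (s - t) ltac:(lra) Hs); replace (t + (s - t)) with s in Hdelta by ring.
  replace (F s - F t - l * (s - t)) with (((F s - F t) / (s - t) - l) * (s - t)) by (field; lra).
  rewrite Rabs_mult; apply Rmult_le_compat_r; [apply Rabs_pos | lra].
- intros Hr eps Heps; destruct (Hr (eps / 2) ltac:(lra)) as [delta [Hdelta Hs]].
  exists (mkposreal _ Hdelta); intros h Hh0 Hh; simpl in Hh.
  specialize (Hs (t + h)); replace (t + h - t) with h in Hs by ring.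
  specialize (Hs Hh); assert (Habs : 0 < Rabs h) by (apply Rabs_pos_lt; exact Hh0).
  replace ((F (t + h) - F t) / h - l) with ((F (t + h) - F t - l * h) / h) by (field; lra).
  rewrite Rabs_div by exact Hh0.
  apply Rmult_lt_reg_r with (Rabs h); [exact Habs|].
  unfold Rdiv; rewrite Rmult_assoc, Rinv_l, Rmult_1_r by lra; nra.
Qed.

Lemma interval_point_near (a b t delta : R) : a < b -> a <= t <= b -> 0 < delta ->
  exists s, a <= s <= b /\ 0 < Rabs (s - t) < delta.
Proof.
intros Hab Ht Hd; set (m := Rmin delta (b - a) / 2).
assert (0 < m /\ m < delta /\ m <= (b - a) / 2) as (Hm0 & Hm1 & Hm2).
{ unfold m; pose proof (Rmin_l delta (b - a)); pose proof (Rmin_r delta (b - a)).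
  pose proof (Rmin_glb_lt delta (b - a) 0 ltac:(lra) ltac:(lra)); lra. }
destruct (Rle_dec (t + m) b).
- exists (t + m); replace (t + m - t) with m by ring; rewrite Rabs_right; lra.
- exists (t - m); replace (t - m - t) with (- m) by ring; rewrite Rabs_Ropp, Rabs_right; lra.
Qed.

Lemma has_deriv_on_unique (F f f' : R -> R) (a b t l : R) : a < b -> a <= t <= b ->
  is_derive F t l -> has_deriv_on f f' a b -> (forall s, a <= s <= b -> F s = f s) ->
  l = f' t.
Proof.
intros Hab Ht HF Hf HFf.
destruct (Req_dec l (f' t)) as [E|NE]; [exact E | exfalso].
set (e := Rabs (l - f' t)); assert (He : 0 < e) by (apply Rabs_pos_lt; lra).
destruct (proj1 (is_derive_remainder F t l) HF (e / 4) ltac:(lra)) as [d1 [Hd1 H1]].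
destruct (Hf t Ht (e / 4) ltac:(lra)) as [d2 [Hd2 H2]].
destruct (interval_point_near a b t (Rmin d1 d2) Hab Ht (Rmin_pos _ _ Hd1 Hd2))
  as [s [Hs [Hst0 Hst]]].
pose proof (Rmin_l d1 d2); pose proof (Rmin_r d1 d2).
specialize (H1 s ltac:(lra)); specialize (H2 s Hs ltac:(lra)).
rewrite (HFf s Hs), (HFf t Ht) in H1.
assert (Hkey : Rabs ((l - f' t) * (s - t)) <= e / 2 * Rabs (s - t)).
{ replace ((l - f' t) * (s - t)) with
    (- (f s - f t - l * (s - t)) + (f s - f t - f' t * (s - t))) by ring.
  eapply Rle_trans; [apply Rabs_triang|]; rewrite Rabs_Ropp; lra. }
rewrite Rabs_mult in Hkey; fold e in Hkey; nra.
Qed.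

Definition tangent_extension (a b : R) (f f' : R -> R) (u : R) : R :=
  f (clamp a b u) + f' (clamp a b u) * (u - clamp a b u).

Section TangentExtension.

Variables (a b : R) (f f' : R -> R).
Hypotheses (hab : a <= b) (hf : has_deriv_on f f' a b) (hf' : lipschitz_on f' a b).

Lemma tangent_extension_id (u : R) : a <= u <= b -> tangent_extension a b f f' u = f u.
Proof. intros Hu; unfold tangent_extension; rewrite clamp_id by assumption; ring. Qed.

Lemma is_derive_tangent_extension (u : R) :
  is_derive (tangent_extension a b f f') u (f' (clamp a b u)).
Proof.
(* The remainder is the one-sided remainder of [f] between the clamped points plus
   [(f' ps - f' pu) * (s - ps)], which is quadratically small by [clamp_dist_mul]. *)
destruct hf' as [L HL]; set (L' := Rmax L 0 + 1).
assert (HL' : 0 < L') by (pose proof (Rmax_r L 0); unfold L'; lra).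
apply is_derive_remainder; intros eps Heps.
set (pu := clamp a b u); pose proof (clamp_in a b hab u) as Hpu; fold pu in Hpu.
destruct (hf pu Hpu (eps / 2) ltac:(lra)) as [d1 [Hd1 Hrem]].
assert (Hd : 0 < Rmin d1 (eps / (2 * L'))) by (apply Rmin_pos; [lra | apply Rdiv_lt_0_compat; lra]).
exists (Rmin d1 (eps / (2 * L'))); split; [exact Hd|]; intros s Hs.
pose proof (Rmin_l d1 (eps / (2 * L'))); pose proof (Rmin_r d1 (eps / (2 * L'))).
set (ps := clamp a b s); pose proof (clamp_in a b hab s) as Hps; fold ps in Hps.
assert (Hp : Rabs (ps - pu) <= Rabs (s - u)) by apply clamp_dist, hab.
assert (Hpp : Rabs (ps - pu) * Rabs (s - ps) <= Rabs (s - u) * Rabs (s - u))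
  by apply clamp_dist_mul, hab.
specialize (Hrem ps Hps ltac:(lra)).
assert (Hslope : Rabs (f' ps - f' pu) * Rabs (s - ps) <= eps / 2 * Rabs (s - u)).
{ apply Rle_trans with (L' * (Rabs (s - u) * Rabs (s - u))).
  - apply Rle_trans with (L' * Rabs (ps - pu) * Rabs (s - ps)).
    + apply Rmult_le_compat_r; [apply Rabs_pos|]; eapply Rle_trans; [apply HL; assumption|].
      apply Rmult_le_compat_r; [apply Rabs_pos|]; pose proof (Rmax_l L 0); unfold L'; lra.
    + rewrite Rmult_assoc; apply Rmult_le_compat_l; lra.
  - rewrite <- Rmult_assoc; apply Rmult_le_compat_r; [apply Rabs_pos|].
    apply Rle_trans with (L' * (eps / (2 * L'))); [apply Rmult_le_compat_l; lra|].
    right; field; lra. }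
unfold tangent_extension; fold pu ps.
replace (f ps + f' ps * (s - ps) - (f pu + f' pu * (u - pu)) - f' pu * (s - u)) with
  ((f ps - f pu - f' pu * (ps - pu)) + (f' ps - f' pu) * (s - ps)) by ring.
eapply Rle_trans; [apply Rabs_triang|]; rewrite Rabs_mult.
apply Rmult_le_compat_l with (r := eps / 2) in Hp; lra.
Qed.

Lemma lipschitz_on_of_deriv : lipschitz_on f a b.
Proof.
destruct (bounded_lipschitz_clamp a b hab f' hf') as [B [L HB]].
exists B; intros s t Hs Ht.
destruct (MVT_gen (tangent_extension a b f f') t s (fun u => f' (clamp a b u))) as [z [_ Hz]].
- intros z _; apply is_derive_tangent_extension.
- intros z _; apply continuity_pt_filterlim, (ex_derive_continuous (V := R_NormedModule)).
  eexists; apply is_derive_tangent_extension.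
- rewrite !tangent_extension_id in Hz by assumption.
  rewrite Hz, Rabs_mult; apply Rmult_le_compat_r; [apply Rabs_pos | apply (HB z z)].
Qed.

End TangentExtension.

Definition segment_mean (f : R -> R) (x u : R) : R := RInt (fun s => f ((u - x) * s + x)) 0 1.

Section SegmentMean.

Variable f : R -> R.
Hypothesis hf : bounded_lipschitz dist_R f.

Lemma continuous_segment (x u s : R) : continuous (fun s => f ((u - x) * s + x)) s.
Proof.
apply bounded_lipschitz_continuous.
apply (bounded_lipschitz_comp dist_R dist_R _ (Rabs (u - x)) dist_R_nonneg); [|exact hf].
intros s1 s2; unfold dist_R.
replace ((u - x) * s1 + x - ((u - x) * s2 + x)) with ((u - x) * (s1 - s2)) by ring.
rewrite Rabs_mult; lra.
Qed.

Lemma ex_RInt_segment (x u : R) : ex_RInt (fun s => f ((u - x) * s + x)) 0 1.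
Proof. apply (ex_RInt_continuous (V := R_CompleteNormedModule)); intros; apply continuous_segment. Qed.

Lemma segment_mean_ge (m x u : R) : (forall t, m <= f t) -> m <= segment_mean f x u.
Proof.
intros Hm; unfold segment_mean.
replace m with (RInt (fun _ => m) 0 1) by (rewrite RInt_const; cbn; unfold mult; cbn; ring).
apply RInt_le; [lra | apply (ex_RInt_const (V := R_NormedModule)) | apply ex_RInt_segment |].
intros; apply Hm.
Qed.

Lemma bounded_lipschitz_segment_mean :
  bounded_lipschitz dist_R2 (fun z => segment_mean f (fst z) (snd z)).
Proof.
destruct hf as [B [L Hf]]; exists B, (Rmax L 0); intros [x u] [x' u']; simpl; unfold segment_mean.
split.
- replace B with ((1 - 0) * B) by ring.
  apply abs_RInt_le_const; [lra | apply ex_RInt_segment | intros t _; apply (Hf _ 0)].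
- rewrite <- (RInt_minus (V := R_CompleteNormedModule)) by apply ex_RInt_segment.
  replace (Rmax L 0 * _) with ((1 - 0) * (Rmax L 0 * dist_R2 (x, u) (x', u'))) by ring.
  apply abs_RInt_le_const; [lra | apply (ex_RInt_minus (V := R_NormedModule)); apply ex_RInt_segment|].
  intros s Hs; set (v := (u - x) * s + x); set (v' := (u' - x') * s + x').
  assert (Hd : dist_R v v' <= dist_R2 (x, u) (x', u')).
  { unfold dist_R, dist_R2, v, v'; simpl.
    replace ((u - x) * s + x - ((u' - x') * s + x')) with ((1 - s) * (x - x') + s * (u - u')) by ring.
    eapply Rle_trans; [apply Rabs_triang|].
    rewrite !Rabs_mult, (Rabs_right s), (Rabs_right (1 - s)) by lra.
    pose proof (Rabs_pos (x - x')); pose proof (Rabs_pos (u - u')); nra. }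
  destruct (Hf v v') as [_ Hvv']; pose proof (dist_R_nonneg v v').
  pose proof (Rmax_l L 0); pose proof (Rmax_r L 0).
  apply Rle_trans with (Rmax L 0 * dist_R v v'); [|apply Rmult_le_compat_l; lra].
  apply Rle_trans with (L * dist_R v v'); [exact Hvv' | apply Rmult_le_compat_r; lra].
Qed.

Lemma segment_mean_difference (F : R -> R) (x u : R) :
  (forall t, Rmin x u <= t <= Rmax x u -> is_derive F t (f t)) ->
  F u - F x = (u - x) * segment_mean f x u.
Proof.
intros HF.
assert (H : is_RInt f ((u - x) * 0 + x) ((u - x) * 1 + x) (minus (F u) (F x))).
{ replace ((u - x) * 0 + x) with x by ring; replace ((u - x) * 1 + x) with u by ring.
  apply (is_RInt_derive (V := R_CompleteNormedModule)); [exact HF|].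
  intros t _; apply bounded_lipschitz_continuous, hf. }
apply (is_RInt_comp_lin (V := R_NormedModule)), (is_RInt_unique (V := R_CompleteNormedModule)) in H.
rewrite (RInt_scal (V := R_CompleteNormedModule)) in H by apply ex_RInt_segment.
exact (eq_sym H).
Qed.

End SegmentMean.

Local Notation RInt_C := (RInt (V := C_R_CompleteNormedModule)).

Lemma Cmod_RInt_le (F : R -> C) (B a b : R) :
  (forall u, Rmin a b <= u <= Rmax a b -> continuous F u) ->
  (forall u, Rmin a b <= u <= Rmax a b -> Cmod (F u) <= B) ->
  Cmod (RInt_C F a b) <= B * Rabs (b - a).
Proof.
intros Hc HB.
assert (Hex : ex_RInt F a b) by (apply (ex_RInt_continuous (V := C_R_CompleteNormedModule)), Hc).
destruct (Rle_dec a b) as [Hab|Hba].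
- rewrite Rmin_left, Rmax_right in * by exact Hab.
  rewrite Rabs_right, Rmult_comm by lra; rewrite Cmod_norm.
  apply (norm_RInt_le_const (V := C_R_NormedModule) F);
    [exact Hab | intros; rewrite <- Cmod_norm; auto|].
  apply (RInt_correct (V := C_R_CompleteNormedModule)), Hex.
- rewrite Rmin_right, Rmax_left in * by lra.
  rewrite <- (opp_RInt_swap (V := C_R_CompleteNormedModule) F b a)
    by (apply (ex_RInt_swap (V := C_R_NormedModule)), Hex).
  change (Cmod (Copp (RInt_C F b a)) <= B * Rabs (b - a)).
  rewrite Cmod_opp, Rabs_left, Rmult_comm by lra; rewrite Cmod_norm.
  replace (- (b - a)) with (a - b) by ring.
  apply (norm_RInt_le_const (V := C_R_NormedModule) F); [lra | intros; rewrite <- Cmod_norm; auto|].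
  apply (RInt_correct (V := C_R_CompleteNormedModule)), (ex_RInt_swap (V := C_R_NormedModule)), Hex.
Qed.

Lemma bounded_lipschitz_RInt_C {T : Type} (d : T -> T -> R) (F : T -> R -> C) (B L : R) :
  (forall z u, 0 <= u <= 1 -> continuous (F z) u) ->
  (forall z t, 0 <= t <= 1 -> Cmod (F z t) <= B) ->
  (forall z w t, 0 <= t <= 1 -> Cmod (Cminus (F z t) (F w t)) <= L * d z w) ->
  bounded_lipschitz_C d (fun z => RInt_C (F z) 0 1).
Proof.
intros Hc HB HL; exists B, L; intros z w.
assert (Hex : forall z, ex_RInt (F z) 0 1).
{ intros; apply (ex_RInt_continuous (V := C_R_CompleteNormedModule)).
  rewrite Rmin_left, Rmax_right by lra; auto. }
split.
- replace B with (B * Rabs (1 - 0)) by (rewrite Rminus_0_r, Rabs_R1; ring).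
  apply Cmod_RInt_le; rewrite Rmin_left, Rmax_right by lra; auto.
- change (Cmod (minus (RInt_C (F z) 0 1) (RInt_C (F w) 0 1)) <= L * d z w).
  rewrite <- (RInt_minus (V := C_R_CompleteNormedModule)) by apply Hex.
  replace (L * d z w) with (L * d z w * Rabs (1 - 0)) by (rewrite Rminus_0_r, Rabs_R1; ring).
  apply Cmod_RInt_le; rewrite Rmin_left, Rmax_right by lra.
  + intros u Hu; apply (continuous_minus (V := C_R_NormedModule)); auto.
  + intros u Hu; apply HL, Hu.
Qed.

Lemma is_RInt_gen_at_right_continuous {V : NormedModule R_AbsRing} (f g : R -> V) (x r : R) :
  x < r -> (forall a, x < a < r -> is_RInt f a r (g a)) -> continuous g x ->
  is_RInt_gen f (at_right x) (at_point r) (g x).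
Proof.
intros Hxr Hint Hg.
apply (filterlimi_lim_ext_loc (fun ab : R * R => g (fst ab))).
- apply (Filter_prod _ _ _ (fun a => x < a < r) (fun b => b = r)); [|reflexivity|].
  + assert (Hd : 0 < r - x) by lra; exists (mkposreal _ Hd); intros a Ha Hxa.
    apply Rabs_lt_between' in Ha; simpl in Ha; lra.
  + intros a b Ha ->; apply Hint, Ha.
- apply (filterlim_comp _ _ _ fst g _ (at_right x)); [apply filterlim_fst|].
  apply (filterlim_filter_le_1 (F := locally x)); [|exact Hg].
  intros P [delta HP]; exists delta; intros y Hy _; apply HP, Hy.
Qed.

Lemma continuous_RInt_C_lower (F : R -> C) (B b a : R) :
  (forall u, continuous F u) -> (forall u, Cmod (F u) <= B) ->
  continuous (fun s => RInt_C F s b) a.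
Proof.
intros Hc HB; apply (continuous_of_lipschitz (V := C_R_NormedModule) _ _ B); intros s.
assert (Hex : forall u v, ex_RInt F u v)
  by (intros; apply (ex_RInt_continuous (V := C_R_CompleteNormedModule)); auto).
assert (E : RInt_C F s b = Cplus (RInt_C F s a) (RInt_C F a b))
  by (symmetry; exact (RInt_Chasles (V := C_R_CompleteNormedModule) F s a b (Hex _ _) (Hex _ _))).
rewrite <- Cmod_norm; change (Cmod (Cminus (RInt_C F s b) (RInt_C F a b)) <= B * Rabs (s - a)).
rewrite E; replace (Cminus (Cplus (RInt_C F s a) (RInt_C F a b)) (RInt_C F a b)) with (RInt_C F s a)
  by (apply injective_projections; simpl; ring).
rewrite Rabs_minus_sym; apply Cmod_RInt_le; auto.
Qed.

Lemma exp_le_compat (x y : R) : x <= y -> exp x <= exp y.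
Proof. intros [Hxy|Hxy]; [left; apply exp_increasing, Hxy | right; rewrite Hxy; reflexivity]. Qed.

Definition csinh (z : C) : C := Cmult (RtoC (/ 2)) (Cminus (cexp z) (cexp (Copp z))).

Lemma cexp_plus (z w : C) : cexp (Cplus z w) = Cmult (cexp z) (cexp w).
Proof.
destruct z as [a b], w as [a' b']; unfold cexp, Cplus, Cmult; simpl.
rewrite exp_plus, cos_plus, sin_plus; f_equal; ring.
Qed.

Lemma ccosh_0 : ccosh (RtoC 0) = RtoC 1.
Proof.
unfold ccosh, cexp, RtoC, Copp, Cmult, Cplus; simpl.
rewrite Ropp_0, exp_0, cos_0, sin_0; f_equal; field.
Qed.

Lemma csinh_pair (a b : R) : csinh (a, b) = (sinh a * cos b, cosh a * sin b).
Proof.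
unfold csinh, cexp, Cminus, Cplus, Copp, Cmult, RtoC, sinh, cosh; simpl.
rewrite cos_neg, sin_neg; f_equal; field.
Qed.

Lemma Rabs_sinh_le (p : R) : Rabs (sinh p) <= Rabs p * exp (Rabs p).
Proof.
assert (Hpos : forall q, 0 <= q -> 0 <= sinh q <= q * exp q).
{ intros q Hq; unfold sinh.
  assert (E : exp (- q) = exp q * exp (- (2 * q))) by (rewrite <- exp_plus; f_equal; ring).
  pose proof (exp_ineq1_le (- (2 * q))); pose proof (exp_pos q).
  assert (exp (- q) <= exp q) by (apply exp_le_compat; lra).
  assert (exp q * (1 - 2 * q) <= exp q * exp (- (2 * q))) by (apply Rmult_le_compat_l; lra).
  split; lra. }
destruct (Rle_dec 0 p) as [Hp|Hp].
- rewrite !Rabs_right by (try apply Rle_ge, Hpos; lra); apply Hpos, Hp.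
- assert (Hs : sinh p = - sinh (- p)) by (unfold sinh; rewrite Ropp_involutive; field).
  rewrite Hs, Rabs_Ropp, (Rabs_left p), Rabs_right by (try apply Rle_ge, Hpos; lra).
  apply Hpos; lra.
Qed.

Lemma sin_sqr_le (q : R) : sin q * sin q <= q * q.
Proof.
assert (Hpos : forall q, 0 <= q -> sin q * sin q <= q * q).
{ intros q' Hq; destruct (Rle_dec 1 q').
  - pose proof (sin2_cos2 q'); unfold Rsqr in *; nra.
  - destruct Hq as [Hq|<-]; [|rewrite sin_0; lra].
    assert (0 <= sin q') by (apply sin_ge_0; pose proof PI2_1; lra).
    pose proof (sin_lt_x q' Hq); nra. }
destruct (Rle_dec 0 q); [apply Hpos; assumption|].
rewrite <- (Ropp_involutive q), sin_neg; pose proof (Hpos (- q) ltac:(lra)); nra.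
Qed.

Lemma Cmod_csinh_le (z : C) : Cmod (csinh z) <= Cmod z * exp (Cmod z).
Proof.
destruct z as [a b]; set (m := Cmod (a, b)).
assert (Hm : 0 <= m) by apply Cmod_ge_0.
assert (Em : m * m = a * a + b * b) by (unfold m, Cmod; simpl; rewrite sqrt_sqrt; nra).
assert (Ha : Rabs a <= m) by apply (re_le_Cmod (a, b)).
assert (He : exp (Rabs a) <= exp m) by (apply exp_le_compat, Ha).
assert (He1 : 1 <= exp m) by (rewrite <- exp_0; apply exp_le_compat, Hm).
assert (Hsh : sinh a * sinh a <= a * a * (exp m * exp m)).
{ assert (Rabs (sinh a) <= Rabs a * exp m).
  { eapply Rle_trans; [apply Rabs_sinh_le|]; apply Rmult_le_compat_l; [apply Rabs_pos | exact He]. }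
  pose proof (Rsqr_abs (sinh a)); pose proof (Rsqr_abs a); unfold Rsqr in *.
  pose proof (Rabs_pos (sinh a)); pose proof (Rabs_pos a); pose proof (exp_pos m).
  assert (Rabs (sinh a) * Rabs (sinh a) <= (Rabs a * exp m) * (Rabs a * exp m))
    by (apply Rmult_le_compat; assumption).
  nra. }
assert (Hch : cosh a * cosh a = 1 + sinh a * sinh a).
{ unfold cosh, sinh; assert (exp a * exp (- a) = 1) by (rewrite <- exp_plus, Rplus_opp_r; apply exp_0).
  nra. }
pose proof (sin_sqr_le b); pose proof (sin2_cos2 b); unfold Rsqr in *.
rewrite csinh_pair, <- (sqrt_Rsqr (m * exp m)) by (pose proof (exp_pos m); nra).
unfold Cmod; simpl; apply sqrt_le_1_alt; unfold Rsqr.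
assert (b * b <= b * b * (exp m * exp m)) by (assert (1 <= exp m * exp m) by nra; nra).
nra.
Qed.

Lemma RtoC_half_twice : Cmult (RtoC (/ 2)) (RtoC 2) = RtoC 1.
Proof. unfold Cmult, RtoC; simpl; f_equal; field. Qed.

Lemma ccosh_plus_sub_ccosh_minus (h k : C) :
  Cminus (ccosh (Cplus h k)) (ccosh (Cminus h k)) = Cmult (RtoC 2) (Cmult (csinh h) (csinh k)).
Proof.
unfold ccosh, csinh.
replace (Copp (Cplus h k)) with (Cplus (Copp h) (Copp k)) by ring.
replace (Cminus h k) with (Cplus h (Copp k)) by ring.
replace (Copp (Cplus h (Copp k))) with (Cplus (Copp h) k) by ring.
rewrite !cexp_plus, <- (Cmult_1_l (Cminus _ _)), <- RtoC_half_twice; ring.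
Qed.

Lemma Cmod_ccosh_sub_le (a b : C) :
  Cmod (Cminus (ccosh a) (ccosh b)) <=
  / 2 * Cmod (Cminus (Cmult a a) (Cmult b b)) * exp (Cmod a + Cmod b).
Proof.
set (h := Cmult (RtoC (/ 2)) (Cplus a b)); set (k := Cmult (RtoC (/ 2)) (Cminus a b)).
assert (Ea : Cplus h k = a).
{ unfold h, k; rewrite <- (Cmult_1_l a) at 3; rewrite <- RtoC_half_twice; ring. }
assert (Eb : Cminus h k = b).
{ unfold h, k; rewrite <- (Cmult_1_l b) at 3; rewrite <- RtoC_half_twice; ring. }
assert (Hhalf : Cmod (RtoC (/ 2)) = / 2) by (rewrite Cmod_R, Rabs_right; lra).
assert (Hh : Cmod h <= / 2 * (Cmod a + Cmod b)).
{ unfold h; rewrite Cmod_mult, Hhalf; apply Rmult_le_compat_l; [lra | apply Cmod_triangle]. }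
assert (Hk : Cmod k <= / 2 * (Cmod a + Cmod b)).
{ unfold k; rewrite Cmod_mult, Hhalf; apply Rmult_le_compat_l; [lra|].
  eapply Rle_trans; [apply Cmod_triangle | rewrite Cmod_opp; lra]. }
assert (Hhk : Cmod h * Cmod k = / 4 * Cmod (Cminus (Cmult a a) (Cmult b b))).
{ rewrite <- Cmod_mult.
  replace (Cmult h k) with (Cmult (Cmult (RtoC (/ 2)) (RtoC (/ 2))) (Cminus (Cmult a a) (Cmult b b)))
    by (unfold h, k; ring).
  rewrite !Cmod_mult, Hhalf; field. }
assert (Hexp : exp (Cmod h) * exp (Cmod k) <= exp (Cmod a + Cmod b))
  by (rewrite <- exp_plus; apply exp_le_compat; lra).
rewrite <- Ea at 1; rewrite <- Eb at 1; rewrite ccosh_plus_sub_ccosh_minus.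
rewrite !Cmod_mult, Cmod_R, Rabs_right by lra.
pose proof (Cmod_csinh_le h); pose proof (Cmod_csinh_le k).
pose proof (Cmod_ge_0 (csinh h)); pose proof (Cmod_ge_0 (csinh k)).
pose proof (Cmod_ge_0 h); pose proof (Cmod_ge_0 k).
pose proof (exp_pos (Cmod h)); pose proof (exp_pos (Cmod k)).
apply Rle_trans with (2 * ((Cmod h * Cmod k) * (exp (Cmod h) * exp (Cmod k)))).
- replace ((Cmod h * Cmod k) * (exp (Cmod h) * exp (Cmod k)))
    with ((Cmod h * exp (Cmod h)) * (Cmod k * exp (Cmod k))) by ring.
  apply Rmult_le_compat_l; [lra | apply Rmult_le_compat; assumption].
- rewrite Hhk; pose proof (Cmod_ge_0 (Cminus (Cmult a a) (Cmult b b))).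
  replace (/ 2 * Cmod (Cminus (Cmult a a) (Cmult b b)) * exp (Cmod a + Cmod b))
    with (2 * (/ 4 * Cmod (Cminus (Cmult a a) (Cmult b b)) * exp (Cmod a + Cmod b))) by field.
  apply Rmult_le_compat_l; [lra|]; apply Rmult_le_compat_l; [lra | exact Hexp].
Qed.

Lemma Cmod_scal_sqr_sub_le (s s' B : R) (j j' : C) :
  0 <= s' <= 1 -> Cmod j <= B -> Cmod j' <= B ->
  Cmod (Cminus (Cmult (RtoC s) (Cmult j j)) (Cmult (RtoC s') (Cmult j' j')))
    <= B * B * Rabs (s - s') + 2 * B * Cmod (Cminus j j').
Proof.
intros Hs' Hj Hj'.
replace (Cminus (Cmult (RtoC s) (Cmult j j)) (Cmult (RtoC s') (Cmult j' j'))) with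
  (Cplus (Cmult (RtoC (s - s')) (Cmult j j)) (Cmult (RtoC s') (Cmult (Cminus j j') (Cplus j j'))))
  by (rewrite RtoC_minus; ring).
eapply Rle_trans; [apply Cmod_triangle|]; rewrite !Cmod_mult, !Cmod_R.
assert (Hsum : Cmod (Cplus j j') <= 2 * B) by (pose proof (Cmod_triangle j j'); lra).
pose proof (Cmod_ge_0 j); pose proof (Cmod_ge_0 (Cminus j j')); pose proof (Cmod_ge_0 (Cplus j j')).
pose proof (Rabs_pos (s - s')); rewrite (Rabs_right s') by lra.
assert (Rabs (s - s') * (Cmod j * Cmod j) <= B * B * Rabs (s - s')).
{ rewrite Rmult_comm; apply Rmult_le_compat_r; [lra | apply Rmult_le_compat; lra]. }
assert (s' * (Cmod (Cminus j j') * Cmod (Cplus j j')) <= 2 * B * Cmod (Cminus j j')).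
{ apply Rle_trans with (1 * (Cmod (Cminus j j') * (2 * B))); [|lra].
  apply Rmult_le_compat; [lra | apply Rmult_le_pos; lra | lra | apply Rmult_le_compat_l; lra]. }
lra.
Qed.

Section Herglotz.

Variables (R0 : R) (c c' g' : R -> R) (lam : R -> C).
Hypotheses (hR0 : 0 < R0 < 1) (hcpos : forall r, R0 <= r <= 1 -> 0 < c r).
Hypotheses (hc : has_deriv_on c c' R0 1) (hc' : lipschitz_on c' R0 1).
Hypotheses (hg : has_deriv_on (fun r => r / c r) g' R0 1) (hgpos : forall r, R0 <= r <= 1 -> 0 < g' r).
Hypothesis hlam : lipschitz_on_C lam R0 1.

Let hR01 : R0 <= 1. Proof. lra. Qed.

Local Notation p := (clamp R0 1).

(* All functions below are extended from [R0,1] to R through [p], so that they are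
   globally bounded and Lipschitz. *)
Definition G (u : R) : R := p u / c (p u).

Definition dG (u : R) : R := (c (p u) - p u * c' (p u)) / (c (p u) * c (p u)).

Definition G_ext (u : R) : R := u / tangent_extension R0 1 c c' u.

Lemma bounded_lipschitz_p : bounded_lipschitz dist_R p.
Proof.
apply (bounded_lipschitz_clamp R0 1 hR01 (fun u => u)).
exists 1; intros s t _ _; lra.
Qed.

Lemma bounded_lipschitz_c : bounded_lipschitz dist_R (fun u => c (p u)).
Proof. apply bounded_lipschitz_clamp, (lipschitz_on_of_deriv R0 1 c c'); assumption. Qed.

Lemma bounded_lipschitz_c' : bounded_lipschitz dist_R (fun u => c' (p u)).
Proof. apply bounded_lipschitz_clamp; assumption. Qed.

Lemma clamp_pos_lower_bound (f : R -> R) :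
  bounded_lipschitz dist_R (fun u => f (p u)) -> (forall t, R0 <= t <= 1 -> 0 < f t) ->
  exists m, 0 < m /\ forall u, m <= f (p u).
Proof.
intros Hf Hpos.
destruct (continuous_pos_lower_bound R0 1 hR01 (fun u => f (p u))) as [m [Hm Hmin]].
- intros t; apply bounded_lipschitz_continuous, Hf.
- intros t Ht; rewrite clamp_id by assumption; apply Hpos, Ht.
- exists m; split; [exact Hm|]; intros u.
  rewrite <- clamp_idem by exact hR01; apply Hmin, clamp_in, hR01.
Qed.

Lemma c_lower_bound : exists m, 0 < m /\ forall u, m <= c (p u).
Proof. apply clamp_pos_lower_bound; [apply bounded_lipschitz_c | exact hcpos]. Qed.

Lemma bounded_lipschitz_G : bounded_lipschitz dist_R G.
Proof.
destruct c_lower_bound as [m [Hm Hc]].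
apply bounded_lipschitz_mult; [apply bounded_lipschitz_p|].
apply (bounded_lipschitz_inv _ _ m Hm Hc), bounded_lipschitz_c.
Qed.

Lemma bounded_lipschitz_dG : bounded_lipschitz dist_R dG.
Proof.
destruct c_lower_bound as [m [Hm Hc]].
apply bounded_lipschitz_mult.
- apply bounded_lipschitz_plus; [apply bounded_lipschitz_c|].
  apply bounded_lipschitz_opp, bounded_lipschitz_mult;
    [apply bounded_lipschitz_p | apply bounded_lipschitz_c'].
- apply (bounded_lipschitz_inv _ _ (m * m)); [nra | intros t; pose proof (Hc t); nra|].
  apply bounded_lipschitz_mult; apply bounded_lipschitz_c.
Qed.

Lemma is_derive_G_ext (u : R) : R0 <= u <= 1 -> is_derive G_ext u (dG u).
Proof.
intros Hu; pose proof (hcpos u Hu).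
replace (dG u) with
  ((1 * tangent_extension R0 1 c c' u - u * c' (p u)) / (tangent_extension R0 1 c c' u) ^ 2).
- apply is_derive_div; [apply (is_derive_id (K := R_AbsRing)) | | ].
  + apply is_derive_tangent_extension; assumption.
  rewrite tangent_extension_id by assumption; lra.
- unfold dG; rewrite tangent_extension_id, clamp_id by assumption; field; lra.
Qed.

Lemma dG_eq (u : R) : R0 <= u <= 1 -> dG u = g' u.
Proof.
intros Hu; apply (has_deriv_on_unique G_ext (fun r => r / c r) g' R0 1); [lra | exact Hu | | exact hg |].
- apply is_derive_G_ext, Hu.
- intros s Hs; unfold G_ext; rewrite tangent_extension_id by assumption; reflexivity.
Qed.

Lemma dG_lower_bound : exists m, 0 < m /\ forall u, m <= dG u.
Proof.
destruct (clamp_pos_lower_bound dG) as [m [Hm Hmin]].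
- apply (bounded_lipschitz_comp dist_R dist_R p 1 dist_R_nonneg).
  + intros s t; unfold dist_R; rewrite Rmult_1_l; apply clamp_dist, hR01.
  + apply bounded_lipschitz_dG.
- intros t Ht; rewrite dG_eq by exact Ht; apply hgpos, Ht.
- exists m; split; [exact Hm|]; intros u.
  replace (dG u) with (dG (p u)) by (unfold dG; rewrite clamp_idem by exact hR01; reflexivity).
  apply Hmin.
Qed.

Lemma G_sub (x u : R) : R0 <= x <= 1 -> R0 <= u <= 1 ->
  G u - G x = (u - x) * segment_mean dG x u.
Proof.
intros Hx Hu; rewrite <- (segment_mean_difference dG bounded_lipschitz_dG G_ext).
- unfold G, G_ext; rewrite !tangent_extension_id, !clamp_id by assumption; reflexivity.
- intros t Ht; apply is_derive_G_ext.
  pose proof (Rmin_l x u); pose proof (Rmin_r x u); pose proof (Rmax_l x u); pose proof (Rmax_r x u).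
  unfold Rmin, Rmax in *; destruct Rle_dec; lra.
Qed.

Lemma G_lower_bound : exists m, 0 < m /\ forall u, m <= G u.
Proof.
destruct bounded_lipschitz_c as [B [L HB]]; destruct c_lower_bound as [m [Hm Hc]].
assert (HB' : forall u, c (p u) <= B)
  by (intros u; destruct (HB u u) as [Hu _]; pose proof (Rle_abs (c (p u))); lra).
assert (0 < B) by (pose proof (Hc 0); pose proof (HB' 0); lra).
exists (R0 / B); split; [apply Rdiv_lt_0_compat; lra|]; intros u; unfold G.
pose proof (clamp_in R0 1 hR01 u); pose proof (Hc u); pose proof (HB' u).
apply Rmult_le_compat; [lra | apply Rlt_le, Rinv_0_lt_compat; lra | lra | apply Rinv_le_contravar; lra].
Qed.

(* [Gsq_quotient (x, u) = (G u ^ 2 - G x ^ 2) / (u - x)], without the removable singularity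
   at [u = x]. *)
Definition Gsq_quotient (z : R * R) : R :=
  segment_mean dG (fst z) (snd z) * (G (snd z) + G (fst z)).

Lemma Gsq_quotient_lower_bound : exists m, 0 < m /\ forall z, m <= Gsq_quotient z.
Proof.
destruct dG_lower_bound as [m1 [Hm1 H1]]; destruct G_lower_bound as [m2 [Hm2 H2]].
exists (m1 * (m2 + m2)); split; [nra|]; intros [x u]; unfold Gsq_quotient; simpl.
pose proof (segment_mean_ge dG bounded_lipschitz_dG m1 x u H1); pose proof (H2 x); pose proof (H2 u).
apply Rmult_le_compat; lra.
Qed.

Lemma bounded_lipschitz_Gsq_quotient : bounded_lipschitz dist_R2 Gsq_quotient.
Proof.
apply bounded_lipschitz_mult; [apply bounded_lipschitz_segment_mean, bounded_lipschitz_dG|].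
apply bounded_lipschitz_plus; [apply bounded_lipschitz_snd | apply bounded_lipschitz_fst];
  apply bounded_lipschitz_G.
Qed.

Definition kernel_weight (z : R * R) : R :=
  2 * p (snd z) / (c (p (snd z)) * c (p (snd z))) / sqrt (Gsq_quotient z).

Definition kernel (z : R * R) : C := Cmult (lam (p (snd z))) (RtoC (kernel_weight z)).

Lemma bounded_lipschitz_kernel : bounded_lipschitz_C dist_R2 kernel.
Proof.
destruct c_lower_bound as [m [Hm Hc]]; destruct Gsq_quotient_lower_bound as [q [Hq HQ]].
apply bounded_lipschitz_C_scal.
- apply (bounded_lipschitz_C_snd (fun u => lam (p u))), bounded_lipschitz_C_clamp; assumption.
- apply bounded_lipschitz_mult; [apply bounded_lipschitz_mult|].
  + apply bounded_lipschitz_mult;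
      [apply bounded_lipschitz_const | apply bounded_lipschitz_snd, bounded_lipschitz_p].
  + apply (bounded_lipschitz_inv _ _ (m * m)); [nra | intros z; pose proof (Hc (snd z)); nra|].
    apply bounded_lipschitz_mult; apply (bounded_lipschitz_snd (fun u => c (p u))), bounded_lipschitz_c.
  + apply (bounded_lipschitz_inv _ _ (sqrt q));
      [apply sqrt_lt_R0, Hq | intros; apply sqrt_le_1_alt, HQ|].
    apply (bounded_lipschitz_sqrt _ _ q Hq HQ), bounded_lipschitz_Gsq_quotient.
Qed.

Lemma Hfun_eq (x u : R) : R0 <= x -> x < u -> u <= 1 ->
  Hfun c u x = kernel_weight (x, u) / (2 * sqrt (u - x)).
Proof.
intros Hx Hxu Hu.
assert (Hx1 : R0 <= x <= 1) by lra; assert (Hu1 : R0 <= u <= 1) by lra.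
pose proof (hcpos x Hx1); pose proof (hcpos u Hu1).
assert (EGx : G x = x / c x) by (unfold G; rewrite clamp_id by assumption; reflexivity).
assert (EGu : G u = u / c u) by (unfold G; rewrite clamp_id by assumption; reflexivity).
destruct Gsq_quotient_lower_bound as [q [Hq HQ]]; pose proof (HQ (x, u)) as HQxu.
assert (Hsq : G u * G u - G x * G x = (u - x) * Gsq_quotient (x, u)).
{ unfold Gsq_quotient; simpl; rewrite <- Rmult_assoc, <- G_sub by assumption; ring. }
assert (Hsqrt : sqrt (G u * G u - G x * G x) = sqrt (u - x) * sqrt (Gsq_quotient (x, u)))
  by (rewrite Hsq; apply sqrt_mult; lra).
assert (0 < sqrt (u - x)) by (apply sqrt_lt_R0; lra).
assert (0 < sqrt (Gsq_quotient (x, u))) by (apply sqrt_lt_R0; lra).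
assert (HGu : 0 < G u) by (rewrite EGu; apply Rdiv_lt_0_compat; lra).
assert (E1 : 1 - (x * c u / (u * c x)) ^ 2 = (G u * G u - G x * G x) / (G u * G u))
  by (rewrite EGu, EGx; field; lra).
unfold Hfun; rewrite E1, sqrt_div_alt, Hsqrt, sqrt_square by nra; unfold kernel_weight; cbn [snd].
rewrite EGu, !clamp_id by assumption; field; lra.
Qed.

Definition J (r x : R) : C := RInt_C (fun t => kernel (x, x + (r - x) * (t * t))) 0 1.

(* [I r x] is the integral of [lam u H(u;x)] over [x,r], after the substitution [u = x + (r - x) t^2]. *)
Definition I (r x : R) : C := Cmult (RtoC (sqrt (r - x))) (J r x).

Lemma continuous_kernel_slice (x : R) (phi : R -> R) (t : R) :
  continuous phi t -> continuous (fun t => kernel (x, phi t)) t.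
Proof.
intros Hphi; apply (continuous_comp phi (fun u => kernel (x, u))); [exact Hphi|].
apply bounded_lipschitz_C_continuous.
apply (bounded_lipschitz_C_comp dist_R2 dist_R (fun u => (x, u)) 1);
  [|intros s u; unfold dist_R2, dist_R; simpl|].
- apply dist_R2_nonneg.
- rewrite Rminus_diag, Rabs_R0; lra.
- apply bounded_lipschitz_kernel.
Qed.

Lemma continuous_kernel_path (r x t : R) : continuous (fun t => kernel (x, x + (r - x) * (t * t))) t.
Proof.
apply continuous_kernel_slice, (ex_derive_continuous (V := R_NormedModule)); auto_derive; trivial.
Qed.

Lemma bounded_lipschitz_J : bounded_lipschitz_C dist_R2 (fun z => J (fst z) (snd z)).
Proof.
destruct bounded_lipschitz_kernel as [B [L HK]].
apply (bounded_lipschitz_RInt_C dist_R2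
  (fun z t => kernel (snd z, snd z + (fst z - snd z) * (t * t))) B (Rmax L 0 * 2)).
- intros z u _; apply continuous_kernel_path.
- intros z t _; apply (HK _ (0, 0)).
- intros [r x] [r' x'] t Ht; simpl.
  set (u := x + (r - x) * (t * t)); set (u' := x' + (r' - x') * (t * t)).
  destruct (HK (x, u) (x', u')) as [_ Hd].
  assert (Hpath : dist_R2 (x, u) (x', u') <= 2 * dist_R2 (r, x) (r', x')).
  { unfold dist_R2, u, u'; simpl.
    replace (x + (r - x) * (t * t) - (x' + (r' - x') * (t * t)))
      with ((1 - t * t) * (x - x') + t * t * (r - r')) by ring.
    assert (0 <= t * t <= 1) by nra.
    eapply Rle_trans; [apply Rplus_le_compat_l, Rabs_triang|].
    rewrite (Rabs_mult (1 - t * t)), (Rabs_mult (t * t)).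
    rewrite (Rabs_right (1 - t * t)), (Rabs_right (t * t)) by lra.
    pose proof (Rabs_pos (x - x')); pose proof (Rabs_pos (r - r')); nra. }
  pose proof (Rmax_l L 0); pose proof (Rmax_r L 0); pose proof (dist_R2_nonneg (x, u) (x', u')).
  apply Rle_trans with (Rmax L 0 * dist_R2 (x, u) (x', u')); [nra|].
  rewrite Rmult_assoc; apply Rmult_le_compat_l; lra.
Qed.

Lemma is_RInt_substitution (r x a : R) : R0 <= x -> x < a < r -> r <= 1 ->
  is_RInt (fun u => Cmult (lam u) (RtoC (Hfun c u x))) a r
    (Cmult (RtoC (sqrt (r - x)))
       (RInt_C (fun t => kernel (x, x + (r - x) * (t * t))) (sqrt ((a - x) / (r - x))) 1)).
Proof.
intros Hx Ha Hr.
set (F := fun t => kernel (x, x + (r - x) * (t * t))).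
set (psi := fun u => sqrt ((u - x) / (r - x))).
set (dpsi := fun u => / (2 * sqrt ((u - x) / (r - x))) * / (r - x)).
assert (Hpsi_r : psi r = 1) by (unfold psi; rewrite Rdiv_diag, sqrt_1 by lra; reflexivity).
assert (Hsub : is_RInt (fun u => scal (dpsi u) (F (psi u))) a r (RInt_C F (psi a) (psi r))).
{ apply (is_RInt_comp (V := C_R_CompleteNormedModule)); [intros; apply continuous_kernel_path|].
  intros u Hu; rewrite Rmin_left, Rmax_right in Hu by lra.
  assert (0 < (u - x) / (r - x)) by (apply Rdiv_lt_0_compat; lra).
  assert (0 < sqrt ((u - x) / (r - x))) by (apply sqrt_lt_R0; lra).
  split.
  - unfold psi, dpsi; auto_derive; [lra|]; unfold Rminus, Rdiv; ring.
  - apply (ex_derive_continuous (V := R_NormedModule)); unfold dpsi; auto_derive.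
    change ((u + - x) * / (r - x)) with ((u - x) / (r - x)); repeat split; lra. }
rewrite Hpsi_r in Hsub.
apply (is_RInt_scal (V := C_R_NormedModule) _ _ _ (sqrt (r - x))) in Hsub.
rewrite scal_R_Cmult in Hsub; refine (is_RInt_ext (V := C_R_NormedModule) _ _ _ _ _ _ Hsub).
intros u Hu; rewrite Rmin_left, Rmax_right in Hu by lra.
assert (Hsr : 0 < sqrt (r - x)) by (apply sqrt_lt_R0; lra).
assert (Hsu : 0 < sqrt (u - x)) by (apply sqrt_lt_R0; lra).
assert (Hpsi : psi u = sqrt (u - x) / sqrt (r - x)) by (apply sqrt_div_alt; lra).
assert (Hpath : x + (r - x) * (psi u * psi u) = u).
{ unfold psi; rewrite sqrt_sqrt by (apply Rdiv_le_0_compat; lra); field; lra. }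
assert (Hweight : sqrt (r - x) * dpsi u = / (2 * sqrt (u - x))).
{ unfold dpsi; fold (psi u); rewrite Hpsi.
  replace (r - x) with (sqrt (r - x) * sqrt (r - x)) at 3 by (apply sqrt_sqrt; lra).
  field; lra. }
unfold F, kernel; rewrite Hpath; cbn [snd]; rewrite clamp_id, Hfun_eq, !scal_R_Cmult by lra.
replace (kernel_weight (x, u) / (2 * sqrt (u - x))) with (sqrt (r - x) * dpsi u * kernel_weight (x, u))
  by (rewrite Hweight; unfold Rdiv; ring).
apply injective_projections; simpl; ring.
Qed.

Lemma is_RInt_gen_I (r x : R) : tri R0 1 r x ->
  is_RInt_gen (fun u => Cmult (lam u) (RtoC (Hfun c u x))) (at_right x) (at_point r) (I r x).
Proof.
intros [Hx [Hxr Hr]].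
set (F := fun t => kernel (x, x + (r - x) * (t * t))).
set (g := fun a => Cmult (RtoC (sqrt (r - x))) (RInt_C F (sqrt ((a - x) / (r - x))) 1)).
replace (I r x) with (g x).
2: { unfold g, I, J; rewrite Rminus_diag; unfold Rdiv; rewrite Rmult_0_l, sqrt_0; reflexivity. }
apply is_RInt_gen_at_right_continuous; [exact Hxr | intros a Ha; apply is_RInt_substitution; lra|].
destruct bounded_lipschitz_kernel as [B [L HK]].
apply (continuous_ext (fun a => scal (sqrt (r - x)) (RInt_C F (sqrt ((a - x) / (r - x))) 1)));
  [intros; apply scal_R_Cmult|].
apply (continuous_scal_r (V := C_R_NormedModule)).
apply (continuous_comp (fun a => sqrt ((a - x) / (r - x))) (fun s => RInt_C F s 1)).
- apply continuous_sqrt_comp, (ex_derive_continuous (V := R_NormedModule)); auto_derive; lra.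
- apply (continuous_RInt_C_lower F B);
    [intros; apply continuous_kernel_path | intros; apply (HK _ (0, 0))].
Qed.

Lemma J_bound : exists B, forall r x, Cmod (J r x) <= B.
Proof.
destruct bounded_lipschitz_J as [B [L HJ]]; exists B; intros r x.
exact (proj1 (HJ (r, x) (r, x))).
Qed.

Lemma Cmod_I_le (r x : R) : x <= r <= x + 1 -> Cmod (I r x) <= Cmod (J r x).
Proof.
intros Hrx; unfold I; rewrite Cmod_mult, Cmod_R, Rabs_right by (apply Rle_ge, sqrt_pos).
assert (sqrt (r - x) <= 1) by (rewrite <- sqrt_1; apply sqrt_le_1_alt; lra).
pose proof (Cmod_ge_0 (J r x)); nra.
Qed.

Lemma I_sqr (r x : R) : x <= r ->
  Cmult (I r x) (I r x) = Cmult (RtoC (r - x)) (Cmult (J r x) (J r x)).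
Proof.
intros Hxr; unfold I; rewrite <- (sqrt_sqrt (r - x)) at 3 by lra.
rewrite RtoC_mult; ring.
Qed.

Lemma I_sqr_lipschitz : exists K, forall r x r' x', tri R0 1 r x -> tri R0 1 r' x' ->
  Cmod (Cminus (Cmult (I r x) (I r x)) (Cmult (I r' x') (I r' x')))
    <= K * Rmax (Rabs (r - r')) (Rabs (x - x')).
Proof.
destruct bounded_lipschitz_J as [B [L HJ]].
exists (2 * (B * B + 2 * B * Rmax L 0)); intros r x r' x' [Hx [Hxr Hr]] [Hx' [Hxr' Hr']].
set (m := Rmax (Rabs (r - r')) (Rabs (x - x'))).
pose proof (Rmax_l (Rabs (r - r')) (Rabs (x - x'))); pose proof (Rmax_r (Rabs (r - r')) (Rabs (x - x'))).
destruct (HJ (r, x) (r', x')) as [HB HL]; destruct (HJ (r', x') (r, x)) as [HB' _]; simpl in HB, HB', HL.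
assert (Hd : dist_R2 (r, x) (r', x') <= 2 * m) by (unfold dist_R2, m; simpl; lra).
assert (Hs : Rabs ((r - x) - (r' - x')) <= 2 * m).
{ replace ((r - x) - (r' - x')) with ((r - r') - (x - x')) by ring.
  eapply Rle_trans; [apply Rabs_triang|]; rewrite Rabs_Ropp; unfold m; lra. }
assert (HJJ : Cmod (Cminus (J r x) (J r' x')) <= Rmax L 0 * (2 * m)).
{ pose proof (Rmax_l L 0); pose proof (Rmax_r L 0); pose proof (dist_R2_nonneg (r, x) (r', x')).
  eapply Rle_trans; [exact HL|].
  apply Rle_trans with (Rmax L 0 * dist_R2 (r, x) (r', x'));
    [apply Rmult_le_compat_r | apply Rmult_le_compat_l]; lra. }
rewrite !I_sqr by lra.
eapply Rle_trans; [apply (Cmod_scal_sqr_sub_le _ _ B); [lra | exact HB | exact HB']|].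
pose proof (Cmod_ge_0 (J r x)).
assert (B * B * Rabs (r - x - (r' - x')) <= B * B * (2 * m)) by (apply Rmult_le_compat_l; nra).
assert (2 * B * Cmod (Cminus (J r x) (J r' x')) <= 2 * B * (Rmax L 0 * (2 * m)))
  by (apply Rmult_le_compat_l; lra).
lra.
Qed.

Lemma ccosh_I_lipschitz : exists L, forall r x r' x', tri R0 1 r x -> tri R0 1 r' x' ->
  Cmod (Cminus (ccosh (I r x)) (ccosh (I r' x'))) <= L * Rmax (Rabs (r - r')) (Rabs (x - x')).
Proof.
destruct J_bound as [B HB]; destruct I_sqr_lipschitz as [K HK].
exists (/ 2 * K * exp (B + B)); intros r x r' x' Hrx Hrx'.
pose proof (HK r x r' x' Hrx Hrx') as HKrx; destruct Hrx as [Hx [Hxr Hr]], Hrx' as [Hx' [Hxr' Hr']].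
assert (Hexp : exp (Cmod (I r x) + Cmod (I r' x')) <= exp (B + B)).
{ apply exp_le_compat, Rplus_le_compat.
  - eapply Rle_trans; [apply Cmod_I_le; lra | apply HB].
  - eapply Rle_trans; [apply Cmod_I_le; lra | apply HB]. }
eapply Rle_trans; [apply Cmod_ccosh_sub_le|].
replace (/ 2 * K * exp (B + B) * Rmax (Rabs (r - r')) (Rabs (x - x')))
  with (/ 2 * (K * Rmax (Rabs (r - r')) (Rabs (x - x'))) * exp (B + B)) by ring.
apply Rmult_le_compat; [ | apply Rlt_le, exp_pos | lra | exact Hexp].
pose proof (Cmod_ge_0 (Cminus (Cmult (I r x) (I r x)) (Cmult (I r' x') (I r' x')))); lra.
Qed.

Lemma ccosh_I_diagonal (r0 : R) : R0 <= r0 <= 1 ->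
  forall eps, 0 < eps -> exists delta, 0 < delta /\
    forall r x, tri R0 1 r x -> Rabs (r - r0) < delta -> Rabs (x - r0) < delta ->
      Cmod (Cminus (ccosh (I r x)) (RtoC 1)) < eps.
Proof.
intros _ eps Heps; destruct J_bound as [B HB].
set (M := / 2 * (B * B) * exp B).
assert (HM : 0 <= M)
  by (pose proof (Cmod_ge_0 (J 0 0)); pose proof (HB 0 0); pose proof (exp_pos B); unfold M; nra).
exists (eps / (2 * M + 1)); split; [apply Rdiv_lt_0_compat; lra|].
intros r x [Hx [Hxr Hr]] Hr0 Hx0.
assert (Hrx : r - x < 2 * (eps / (2 * M + 1))) by (apply Rabs_def2 in Hr0; apply Rabs_def2 in Hx0; lra).
assert (Hbound : Cmod (Cminus (ccosh (I r x)) (RtoC 1)) <= (r - x) * M).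
{ rewrite <- ccosh_0; eapply Rle_trans; [apply Cmod_ccosh_sub_le|].
  rewrite I_sqr, Cmod_0, Rplus_0_r by lra.
  replace (Cminus (Cmult (RtoC (r - x)) (Cmult (J r x) (J r x))) (Cmult (RtoC 0) (RtoC 0)))
    with (Cmult (RtoC (r - x)) (Cmult (J r x) (J r x))) by ring.
  rewrite !Cmod_mult, Cmod_R, Rabs_right by lra.
  pose proof (Cmod_ge_0 (J r x)); pose proof (HB r x).
  assert (Cmod (J r x) * Cmod (J r x) <= B * B) by (apply Rmult_le_compat; lra).
  assert (exp (Cmod (I r x)) <= exp B)
    by (apply exp_le_compat; eapply Rle_trans; [apply Cmod_I_le; lra | apply HB]).
  unfold M; replace ((r - x) * (/ 2 * (B * B) * exp B)) with (/ 2 * ((r - x) * (B * B)) * exp B) by ring.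
  apply Rmult_le_compat; [nra | apply Rlt_le, exp_pos | | assumption].
  apply Rmult_le_compat_l, Rmult_le_compat_l; lra. }
eapply Rle_lt_trans; [exact Hbound|].
apply Rle_lt_trans with (2 * (eps / (2 * M + 1)) * M); [apply Rmult_le_compat_r; lra|].
apply Rlt_le_trans with (eps / (2 * M + 1) * (2 * M + 1)); [|right; field; lra].
assert (0 < eps / (2 * M + 1)) by (apply Rdiv_lt_0_compat; lra); nra.
Qed.

End Herglotz.
Theorem lemma5p2 (R0 : R) (c : R -> R) (lam : R -> C)
  (hR0 : 0 < R0 < 1)
  (hcpos : forall r, R0 <= r <= 1 -> 0 < c r)
  (hc : C11_on c R0 1)
  (hHerglotz : exists g', has_deriv_on (fun r => r / c r) g' R0 1 /\
                 forall r, R0 <= r <= 1 -> 0 < g' r)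
  (hlam : lipschitz_on_C lam R0 1) :
  exists I : R -> R -> C,
    (forall r x, tri R0 1 r x ->
       is_RInt_gen (fun u => Cmult (lam u) (RtoC (Hfun c u x)))
         (at_right x) (at_point r) (I r x)) /\
    (exists L, forall r x r' x', tri R0 1 r x -> tri R0 1 r' x' ->
       Cmod (Cminus (ccosh (I r x)) (ccosh (I r' x')))
         <= L * Rmax (Rabs (r - r')) (Rabs (x - x'))) /\
    (forall r0, R0 <= r0 <= 1 ->
       forall eps, 0 < eps -> exists delta, 0 < delta /\
         forall r x, tri R0 1 r x -> Rabs (r - r0) < delta -> Rabs (x - r0) < delta ->
           Cmod (Cminus (ccosh (I r x)) (RtoC 1)) < eps).
Proof.
destruct hc as [c' [hc hc']]; destruct hHerglotz as [g' [hg hgpos]].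
exists (I R0 c c' lam).
split; [|split].
- apply is_RInt_gen_I with (g' := g'); assumption.
- apply ccosh_I_lipschitz with (g' := g'); assumption.
- apply ccosh_I_diagonal with (g' := g'); assumption.
Qed.
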